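(* Let $S=\mathbb{N}_\wedge$ and let $w$ be a weight on $S$. Then $T=\begin{pmatrix}\ell^{1}(S,w)&\ell^{1}(S,w)\\0&\ell^{1}(S,w)\end{pmatrix}$ is not approximately biprojective.
   Context: $\mathbb{N}_\wedge$ is $\mathbb{N}$ with operation $m\wedge n=\min\{m,n\}$. A weight is a function $w:S\to\mathbb{R}^+$ with $w(st)\le w(s)w(t)$; $\ell^1(S,w)=\{f:\sum_s|f(s)|w(s)<\infty\}$ with convolution $\delta_s*\delta_t=\delta_{st}$. For a Banach algebra $A$, $T=\begin{pmatrix}A&A\\0&A\end{pmatrix}$ is the algebra of upper triangular matrices with entries in $A$, matrix operations and norm $\|a\|+\|x\|+\|b\|$. A Banach algebra $B$ is approximately biprojective if there is a net $(\rho_\alpha)$ of continuous $B$-bimodule morphisms $B\to B\otimes_pB$ with $\pi_B\circ\rho_\alpha(b)\to b$ for all $b$, where $\pi_B(b\otimes c)=bc$. *)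

From HB Require Import structures.
From mathcomp Require Import all_boot all_order all_algebra.
From mathcomp Require Import all_classical all_reals topology normedtype sequences.
From mathcomp Require Import complex.
Set Implicit Arguments. Unset Strict Implicit. Unset Printing Implicit Defensive.
Import Order.TTheory GRing.Theory Num.Theory.
Import numFieldTopology.Exports numFieldNormedType.Exports.
Local Open Scope ring_scope.

(* the sum of a complex series (real and imaginary parts summed separately;
   only used for absolutely convergent series) *)
Definition csum (R : realType) (c : nat -> R[i]) : R[i] :=
  (limn (fun N => \sum_(n < N) (@complex.Re R (c n) : R)) +i* limn (fun N => \sum_(n < N) (@complex.Im R (c n) : R)))%C.

Definition cnorm (R : realType) (z : R[i]) : R := ComplexField.Normc.normc z.

(* A Banach algebra over C, presented by a carrier type with a membership
   predicate (the elements of the algebra), its operations and its norm. *)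
Record balg (R : realType) := BAlg {
  bcar :> Type;
  bmem : bcar -> Prop;
  bzero : bcar;
  badd : bcar -> bcar -> bcar;
  bopp : bcar -> bcar;
  bscal : R[i] -> bcar -> bcar;
  bmul : bcar -> bcar -> bcar;
  bnorm : bcar -> R }.

Section Tensor.
Variables (R : realType) (B : balg R).

(* An element of the completed projective tensor product B ⊗_p B is represented
   by a series  sum_n x_n ⊗ y_n  with  sum_n ||x_n|| ||y_n|| < oo. *)
Definition rep := nat -> (bcar B * bcar B).

Definition rep_ok (u : rep) : Prop :=
  (forall n, bmem (u n).1 /\ bmem (u n).2) /\
  exists M : R, forall N, \sum_(n < N) bnorm (u n).1 * bnorm (u n).2 <= M.

Definition rep_cost (u : rep) : R :=
  limn (fun N => \sum_(n < N) bnorm (u n).1 * bnorm (u n).2).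

(* bounded bilinear forms B x B -> C (the dual of B ⊗_p B) *)
Definition bdd_bilinear (phi : bcar B -> bcar B -> R[i]) : Prop :=
  (forall a a' b, bmem a -> bmem a' -> bmem b ->
     phi (badd a a') b = phi a b + phi a' b /\ phi b (badd a a') = phi b a + phi b a') /\
  (forall (l : R[i]) a b, bmem a -> bmem b ->
     phi (bscal l a) b = l * phi a b /\ phi a (bscal l b) = l * phi a b) /\
  exists M : R, forall a b, bmem a -> bmem b ->
     cnorm (phi a b) <= M * bnorm a * bnorm b.

(* equality in B ⊗_p B of the elements represented by u and v
   (elements of the projective tensor product are separated by its dual) *)
Definition teq (u v : rep) : Prop :=
  forall phi, bdd_bilinear phi ->
    csum (fun n => phi (u n).1 (u n).2) = csum (fun n => phi (v n).1 (v n).2).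

Definition tadd (u v : rep) : rep :=
  fun n => if odd n then v n./2 else u n./2.
Definition tscal (l : R[i]) (u : rep) : rep :=
  fun n => (bscal l (u n).1, (u n).2).
Definition tlmul (a : bcar B) (u : rep) : rep :=
  fun n => (bmul a (u n).1, (u n).2).
Definition trmul (u : rep) (a : bcar B) : rep :=
  fun n => ((u n).1, bmul (u n).2 a).

Definition tnorm_le (u : rep) (r : R) : Prop :=
  forall eps : R, 0 < eps -> exists v, rep_ok v /\ teq v u /\ rep_cost v <= r + eps.

(* pi_B (sum_n x_n ⊗ y_n) = c, i.e. sum_n x_n y_n converges to c in B *)
Definition pi_to (u : rep) (c : bcar B) : Prop :=
  bmem c /\
  forall eps : R, 0 < eps -> exists N0, forall N, (N0 <= N)%N ->
    bnorm (badd (\big[@badd R B/@bzero R B]_(n < N) bmul (u n).1 (u n).2) (bopp c)) < eps.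

Definition bimod_morph (rho : bcar B -> rep) : Prop :=
  (forall a, bmem a -> rep_ok (rho a)) /\
  (forall a b, bmem a -> bmem b -> teq (rho (badd a b)) (tadd (rho a) (rho b))) /\
  (forall l a, bmem a -> teq (rho (bscal l a)) (tscal l (rho a))) /\
  (exists C : R, forall a, bmem a -> tnorm_le (rho a) (C * bnorm a)) /\
  (forall a b, bmem a -> bmem b -> teq (rho (bmul a b)) (tlmul a (rho b))) /\
  (forall a b, bmem a -> bmem b -> teq (rho (bmul b a)) (trmul (rho b) a)).

Definition approx_biprojective : Prop :=
  exists (I : Type) (le : I -> I -> Prop) (rho : I -> bcar B -> rep),
    inhabited I /\
    (forall i, le i i) /\
    (forall i j k, le i j -> le j k -> le i k) /\
    (forall i j, exists k, le i k /\ le j k) /\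
    (forall i, bimod_morph (rho i)) /\
    (forall b, bmem b -> forall eps : R, 0 < eps -> exists i0, forall i, le i0 i ->
       exists c, pi_to (rho i b) c /\ bnorm (badd c (bopp b)) < eps).

End Tensor.

Definition is_weight (R : realType) (w : nat -> R) : Prop :=
  (forall n, 0 < w n) /\ (forall m n, w (minn m n) <= w m * w n).

Definition in_l1 (R : realType) (w : nat -> R) (f : nat -> R[i]) : Prop :=
  exists M : R, forall N, \sum_(n < N) cnorm (f n) * w n <= M.

Definition l1norm (R : realType) (w : nat -> R) (f : nat -> R[i]) : R :=
  limn (fun N => \sum_(n < N) cnorm (f n) * w n).

(* convolution on l^1(N_wedge): (f * g)(k) = sum_{m /\ n = k} f(m) g(n);
   the pairs with min m n = k are split into {m = k, n >= k} and {m > k, n = k}. *)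
Definition conv (R : realType) (f g : nat -> R[i]) : nat -> R[i] :=
  fun k => f k * csum (fun j => g (k + j)%N) + g k * csum (fun j => f (k.+1 + j)%N).

(* T = [[l1, l1],[0, l1]]: (a, x, b) stands for the matrix [[a, x],[0, b]] *)
Definition Tmat (R : realType) (w : nat -> R) : balg R :=
  @BAlg R ((nat -> R[i]) * (nat -> R[i]) * (nat -> R[i]))
    (fun t => in_l1 w t.1.1 /\ in_l1 w t.1.2 /\ in_l1 w t.2)
    ((fun _ => 0), (fun _ => 0), (fun _ => 0))
    (fun s t => ((fun n => s.1.1 n + t.1.1 n), (fun n => s.1.2 n + t.1.2 n),
                 (fun n => s.2 n + t.2 n)))
    (fun s => ((fun n => - s.1.1 n), (fun n => - s.1.2 n), (fun n => - s.2 n)))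
    (fun l s => ((fun n => l * s.1.1 n), (fun n => l * s.1.2 n), (fun n => l * s.2 n)))
    (fun s t => (conv s.1.1 t.1.1,
                 (fun n => conv s.1.1 t.1.2 n + conv s.1.2 t.2 n),
                 conv s.2 t.2))
    (fun s => l1norm w s.1.1 + l1norm w s.1.2 + l1norm w s.2).

From HB Require Import structures.
From mathcomp Require Import all_boot all_order all_algebra.
From mathcomp Require Import all_classical all_reals topology normedtype sequences.
From mathcomp Require Import complex ring lra.
Set Implicit Arguments. Unset Strict Implicit. Unset Printing Implicit Defensive.
Import Order.TTheory GRing.Theory Num.Theory.
Import numFieldTopology.Exports numFieldNormedType.Exports ComplexField.Normc.
Local Open Scope classical_set_scope.
Local Open Scope ring_scope.

(* The sum chi f := sum_n f n is a character of l^1(N_wedge, w): it is bounded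
   since w >= 1, and multiplicative since conv f g k collects exactly the pairs
   (m, n) with min m n = k.  Hence chi11 t := chi t_11 is a bounded character
   of T.  The bounded bilinear form phi (a, b) := chi11 a * b_12(0) vanishes on
   e12 . (T (x) T), while phi (a, b e12) = chi11 (a b).  A bimodule morphism rho
   satisfies rho e12 = e12 . rho e22 = rho e11 . e12, so phi forces
   chi11 (pi (rho e11)) = 0; as chi11 e11 = 1, pi (rho e11) stays away from e11. *)

Section ComplexSeries.
Variable R : realType.
Implicit Types (f g : nat -> R[i]) (u v : nat -> R[i]) (z : R[i]).
Local Notation Re := (@complex.Re R).
Local Notation Im := (@complex.Im R).

Lemma ReD z1 z2 : Re (z1 + z2) = Re z1 + Re z2.
Proof. exact: (raddfD (Re : Rcomplex R -> R)). Qed.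
Lemma ImD z1 z2 : Im (z1 + z2) = Im z1 + Im z2.
Proof. exact: (raddfD (Im : Rcomplex R -> R)). Qed.
Lemma ReN z : Re (- z) = - Re z.
Proof. exact: (raddfN (Re : Rcomplex R -> R)). Qed.
Lemma ImN z : Im (- z) = - Im z.
Proof. exact: (raddfN (Im : Rcomplex R -> R)). Qed.
Lemma ReM z1 z2 : Re (z1 * z2) = Re z1 * Re z2 - Im z1 * Im z2.
Proof. by case: z1; case: z2. Qed.
Lemma ImM z1 z2 : Im (z1 * z2) = Re z1 * Im z2 + Im z1 * Re z2.
Proof. by case: z1 => a b; case: z2 => c d /=; rewrite addrC. Qed.
Lemma Re_sum f N : Re (\sum_(n < N) f n) = \sum_(n < N) Re (f n).
Proof. exact: (raddf_sum (Re : Rcomplex R -> R)). Qed.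
Lemma Im_sum f N : Im (\sum_(n < N) f n) = \sum_(n < N) Im (f n).
Proof. exact: (raddf_sum (Im : Rcomplex R -> R)). Qed.

Lemma cnorm0 : cnorm (0 : R[i]) = 0.
Proof. exact: normc0. Qed.

Lemma cnorm1 : cnorm (1 : R[i]) = 1.
Proof. exact: normc1. Qed.

Lemma cnormN z : cnorm (- z) = cnorm z.
Proof. exact: normcN. Qed.

Lemma cnormM z1 z2 : cnorm (z1 * z2) = cnorm z1 * cnorm z2.
Proof. exact: normcM. Qed.

Lemma cnormD z1 z2 : cnorm (z1 + z2) <= cnorm z1 + cnorm z2.
Proof. exact: le_normcD. Qed.

Lemma cnorm_ge0 z : 0 <= cnorm z.
Proof. by case: z => a b; exact: sqrtr_ge0. Qed.

Lemma cnorm_ge_Re z : `|Re z| <= cnorm z.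
Proof.
case: z => a b; rewrite /cnorm /= -sqrtr_sqr; apply: ler_wsqrtr.
by rewrite lerDl sqr_ge0.
Qed.

Lemma cnorm_ge_Im z : `|Im z| <= cnorm z.
Proof.
case: z => a b; rewrite /cnorm /= -sqrtr_sqr; apply: ler_wsqrtr.
by rewrite lerDr sqr_ge0.
Qed.

Lemma cnorm_le_ReIm z : cnorm z <= `|Re z| + `|Im z|.
Proof.
case: z => a b; rewrite /cnorm /=.
have sq_le : a ^+ 2 + b ^+ 2 <= (`|a| + `|b|) ^+ 2.
  rewrite sqrrD !real_normK ?num_real // lerD2r lerDl.
  by rewrite mulrn_wge0 // mulr_ge0.
apply: le_trans (ler_wsqrtr sq_le) _.
by rewrite sqrtr_sqr ger0_norm // addr_ge0.
Qed.

Definition ccvg u z :=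
  (fun N => Re (u N)) @ \oo --> Re z /\ (fun N => Im (u N)) @ \oo --> Im z.

Lemma eq_ccvg u v z : (forall N, u N = v N) -> ccvg u z -> ccvg v z.
Proof. by move=> e; have -> : u = v by apply: funext. Qed.

Lemma ccvg_cst z : ccvg (fun _ => z) z.
Proof. by split; apply: cvg_cst. Qed.

Lemma ccvgD u v z1 z2 : ccvg u z1 -> ccvg v z2 -> ccvg (fun N => u N + v N) (z1 + z2).
Proof.
move=> [uRe uIm] [vRe vIm]; split.
  by rewrite ReD; under eq_fun => N do rewrite ReD; apply: cvgD.
by rewrite ImD; under eq_fun => N do rewrite ImD; apply: cvgD.
Qed.

Lemma ccvgN u z : ccvg u z -> ccvg (fun N => - u N) (- z).
Proof.
move=> [uRe uIm]; split.
  by rewrite ReN; under eq_fun => N do rewrite ReN; apply: cvgN.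
by rewrite ImN; under eq_fun => N do rewrite ImN; apply: cvgN.
Qed.

Lemma ccvgM u v z1 z2 : ccvg u z1 -> ccvg v z2 -> ccvg (fun N => u N * v N) (z1 * z2).
Proof.
move=> [uRe uIm] [vRe vIm]; split.
  by rewrite ReM; under eq_fun => N do rewrite ReM; apply: cvgB; apply: cvgM.
by rewrite ImM; under eq_fun => N do rewrite ImM; apply: cvgD; apply: cvgM.
Qed.

Lemma ccvg_shiftn k u z : ccvg u z -> ccvg (fun N => u (N + k)%N) z.
Proof. by move=> [uRe uIm]; split; [move: uRe | move: uIm]; rewrite -(cvg_shiftn k). Qed.

Lemma ccvg_cnorm u z :
  (forall e : R, 0 < e -> exists N0, forall N, (N0 <= N)%N -> cnorm (u N - z) < e) ->
  ccvg u z.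
Proof.
move=> uz; split; apply/(@cvgrPdist_lt _ R^o) => e e0; have [N0 hN0] := uz e e0;
  exists N0 => // N /hN0; apply: le_lt_trans; rewrite distrC.
  by rewrite -ReN -ReD cnorm_ge_Re.
by rewrite -ImN -ImD cnorm_ge_Im.
Qed.

Lemma ccvg_csum f z : ccvg (fun N => \sum_(n < N) f n) z -> csum f = z.
Proof.
move=> [fRe fIm]; rewrite /csum.
under eq_fun => N do rewrite -Re_sum.
under [X in (_ +i* limn X)%C]eq_fun => N do rewrite -Im_sum.
by rewrite (cvg_lim _ fRe) // (cvg_lim _ fIm) //; case: z {fRe fIm}.
Qed.

Lemma cnorm_sum_le f N : cnorm (\sum_(n < N) f n) <= \sum_(n < N) cnorm (f n).
Proof.
elim: N => [|N IH]; first by rewrite !big_ord0 cnorm0.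
rewrite !big_ord_recr /=; apply: le_trans (cnormD _ _) _.
by rewrite lerD2r.
Qed.

Definition abs_summable f := exists M : R, forall N, \sum_(n < N) cnorm (f n) <= M.

Lemma abs_summable_ccvg f : abs_summable f -> ccvg (fun N => \sum_(n < N) f n) (csum f).
Proof.
move=> [M fM].
have cvg_dominated (a : nat -> R) : (forall n, `|a n| <= cnorm (f n)) ->
    cvgn (fun N => \sum_(n < N) a n).
  move=> af; suff : cvgn (series a) by rewrite seriesEord.
  apply: normed_cvg; apply: nondecreasing_is_cvgn.
    apply/nondecreasing_seqP => n; rewrite /normed_series_of !seriesEord /=.
    by rewrite big_ord_recr /= lerDl.
  exists M => _ [n _ <-]; rewrite /normed_series_of seriesEord /=.
  by apply: le_trans (fM n); apply: ler_sum => k _; exact: af.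
split.
  under eq_fun => N do rewrite Re_sum.
  exact: (cvg_dominated _ (fun n => cnorm_ge_Re (f n))).
under eq_fun => N do rewrite Im_sum.
exact: (cvg_dominated _ (fun n => cnorm_ge_Im (f n))).
Qed.

Lemma csum_tail f k : abs_summable f ->
  csum (fun j => f (k + j)%N) = csum f - \sum_(j < k) f j.
Proof.
move=> hf; apply: ccvg_csum.
apply: eq_ccvg (ccvgD (ccvg_shiftn k (abs_summable_ccvg hf)) (ccvgN (ccvg_cst _))) => N.
by rewrite addnC big_split_ord /= addrAC subrr add0r.
Qed.

Lemma csum0 : csum (fun _ => 0 : R[i]) = 0.
Proof. by apply: ccvg_csum; apply: eq_ccvg (ccvg_cst 0) => N; rewrite big1. Qed.

Lemma csumD f g : abs_summable f -> abs_summable g ->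
  csum (fun n => f n + g n) = csum f + csum g.
Proof.
move=> hf hg; apply: ccvg_csum.
apply: eq_ccvg (ccvgD (abs_summable_ccvg hf) (abs_summable_ccvg hg)) => N.
by rewrite big_split.
Qed.

Lemma csumN f : abs_summable f -> csum (fun n => - f n) = - csum f.
Proof.
move=> hf; apply: ccvg_csum.
by apply: eq_ccvg (ccvgN (abs_summable_ccvg hf)) => N; rewrite sumrN.
Qed.

Lemma csumZ (l : R[i]) f : abs_summable f -> csum (fun n => l * f n) = l * csum f.
Proof.
move=> hf; apply: ccvg_csum.
by apply: eq_ccvg (ccvgM (ccvg_cst l) (abs_summable_ccvg hf)) => N; rewrite mulr_sumr.
Qed.

Lemma cnorm_csum_le f (M : R) : (forall N, \sum_(n < N) cnorm (f n) <= M) ->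
  cnorm (csum f) <= 2 * M.
Proof.
move=> fM; have [fRe fIm] := abs_summable_ccvg (ex_intro _ M fM).
have partial_le N : cnorm (\sum_(n < N) f n) <= M := le_trans (cnorm_sum_le f N) (fM N).
have Re_le : `|Re (csum f)| <= M.
  apply: (ler_cvg_to (cvg_norm fRe) (cvg_cst M)); apply: nearW => N.
  exact: le_trans (cnorm_ge_Re _) (partial_le N).
have Im_le : `|Im (csum f)| <= M.
  apply: (ler_cvg_to (cvg_norm fIm) (cvg_cst M)); apply: nearW => N.
  exact: le_trans (cnorm_ge_Im _) (partial_le N).
by apply: le_trans (cnorm_le_ReIm _) _; rewrite mulr2n mulrDl mul1r lerD.
Qed.

Lemma csum_conv f g : abs_summable f -> abs_summable g ->
  csum (conv f g) = csum f * csum g.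
Proof.
move=> hf hg; apply: ccvg_csum.
have partial_conv N : \sum_(k < N) conv f g k =
    (\sum_(k < N) f k) * csum g + (\sum_(k < N) g k) * csum f
    - (\sum_(k < N) f k) * (\sum_(k < N) g k).
  elim: N => [|N IH]; first by rewrite !big_ord0; ring.
  rewrite !big_ord_recr /= IH /conv (csum_tail N hg) (csum_tail N.+1 hf).
  by rewrite big_ord_recr /=; ring.
have Ff := abs_summable_ccvg hf; have Gg := abs_summable_ccvg hg.
have := ccvgD (ccvgD (ccvgM Ff (ccvg_cst (csum g))) (ccvgM Gg (ccvg_cst (csum f))))
              (ccvgN (ccvgM Ff Gg)).
have -> : csum f * csum g + csum g * csum f - csum f * csum g = csum f * csum g by ring.
by apply: eq_ccvg => N; rewrite partial_conv.
Qed.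

Definition dirac0 : nat -> R[i] := fun n => if n == 0%N then 1 else 0.

Lemma abs_summable_dirac0 : abs_summable dirac0.
Proof.
exists 1 => -[|N]; first by rewrite big_ord0.
rewrite big_ord_recl big1 ?addr0 => [|n _]; last exact: cnorm0.
by rewrite (_ : cnorm (dirac0 ord0) = 1) //; exact: cnorm1.
Qed.

Lemma csum_dirac0 : csum dirac0 = 1.
Proof.
have := csum_tail 1 abs_summable_dirac0.
rewrite (_ : (fun j => dirac0 (1 + j)%N) = fun _ => 0) // csum0 big_ord1.
by move/eqP; rewrite eq_sym subr_eq0 => /eqP.
Qed.

Lemma conv0l g : conv (fun _ => 0) g = fun _ => 0.
Proof. by apply: funext => k; rewrite /conv csum0 !mul0r mulr0 addr0. Qed.

Lemma conv0r f : conv f (fun _ => 0) = fun _ => 0.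
Proof. by apply: funext => k; rewrite /conv csum0 !mul0r mulr0 addr0. Qed.

Lemma conv_dirac0r f : abs_summable f -> conv f dirac0 = fun k => csum f * dirac0 k.
Proof.
move=> hf; apply: funext => -[|k]; rewrite /conv.
  rewrite (_ : (fun j => dirac0 (0 + j)%N) = dirac0) // csum_dirac0 (csum_tail 1 hf).
  by rewrite big_ord1 /dirac0 /= mulr1 !mul1r mulr1 addrC subrK.
rewrite (_ : (fun j => dirac0 (k.+1 + j)%N) = fun _ => 0) // csum0 /dirac0 /=.
by rewrite !mulr0 mul0r addr0.
Qed.

Lemma conv_dirac0 : conv dirac0 dirac0 = dirac0.
Proof.
rewrite (conv_dirac0r abs_summable_dirac0) csum_dirac0.
by apply: funext => k; rewrite mul1r.
Qed.

End ComplexSeries.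

Arguments dirac0 {R}.

Section WeightedL1.
Variables (R : realType) (w : nat -> R).
Hypothesis w_weight : is_weight w.
Implicit Types f g : nat -> R[i].

Lemma weight_gt0 n : 0 < w n.
Proof. by case: w_weight. Qed.

(* Submultiplicativity at (n, n) reads w n <= w n ^ 2, since n /\ n = n. *)
Lemma weight_ge1 n : 1 <= w n.
Proof.
have := (proj2 w_weight) n n; rewrite minnn.
by rewrite -{1}(mulr1 (w n)) (ler_pM2l (weight_gt0 n)).
Qed.

Lemma cnorm_le_weighted (z : R[i]) n : cnorm z <= cnorm z * w n.
Proof. by rewrite -{1}(mulr1 (cnorm z)) ler_wpM2l ?cnorm_ge0 ?weight_ge1. Qed.

Lemma in_l1_abs_summable f : in_l1 w f -> abs_summable f.
Proof.
move=> [M fM]; exists M => N; apply: le_trans (fM N).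
by apply: ler_sum => n _; exact: cnorm_le_weighted.
Qed.

Lemma l1norm_ge_partial f N : in_l1 w f -> \sum_(n < N) cnorm (f n) * w n <= l1norm w f.
Proof.
move=> [M fM].
have partial_nd : nondecreasing_seq (fun N => \sum_(n < N) cnorm (f n) * w n).
  apply/nondecreasing_seqP => n; rewrite big_ord_recr /= lerDl.
  by rewrite mulr_ge0 ?cnorm_ge0 // ltW // weight_gt0.
apply: nondecreasing_cvgn_le => //; apply: nondecreasing_is_cvgn => //.
by exists M => _ [n _ <-].
Qed.

Lemma l1norm_ge0 f : in_l1 w f -> 0 <= l1norm w f.
Proof. by move=> hf; have := l1norm_ge_partial 0 hf; rewrite big_ord0. Qed.

Lemma cnorm_le_l1norm f n : in_l1 w f -> cnorm (f n) <= l1norm w f.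
Proof.
move=> hf; apply: le_trans (cnorm_le_weighted _ n) _.
apply: le_trans (l1norm_ge_partial n.+1 hf); rewrite big_ord_recr /= lerDr.
by apply: sumr_ge0 => k _; rewrite mulr_ge0 ?cnorm_ge0 // ltW // weight_gt0.
Qed.

Lemma cnorm_csum_le_l1norm f : in_l1 w f -> cnorm (csum f) <= 2 * l1norm w f.
Proof.
move=> hf; apply: cnorm_csum_le => N; apply: le_trans (l1norm_ge_partial N hf).
by apply: ler_sum => n _; exact: cnorm_le_weighted.
Qed.

Lemma in_l1_0 : in_l1 w (fun _ => 0).
Proof. by exists 0 => N; rewrite big1 // => n _; rewrite cnorm0 mul0r. Qed.

Lemma in_l1D f g : in_l1 w f -> in_l1 w g -> in_l1 w (fun n => f n + g n).
Proof.
move=> [Mf fM] [Mg gM]; exists (Mf + Mg) => N.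
apply: le_trans (lerD (fM N) (gM N)); rewrite -big_split /=.
apply: ler_sum => n _; rewrite -mulrDl ler_wpM2r ?cnormD //.
exact: ltW (weight_gt0 n).
Qed.

Lemma in_l1N f : in_l1 w f -> in_l1 w (fun n => - f n).
Proof. by move=> [M fM]; exists M => N; under eq_bigr => n _ do rewrite cnormN. Qed.

Lemma in_l1_dirac0 : in_l1 w dirac0.
Proof.
exists (w 0%N) => -[|N]; first by rewrite big_ord0 ltW // weight_gt0.
rewrite big_ord_recl big1 ?addr0 => [|n _]; last by rewrite cnorm0 mul0r.
by rewrite (_ : cnorm (dirac0 ord0) = 1) ?mul1r //; exact: cnorm1.
Qed.

Lemma in_l1_conv f g : in_l1 w f -> in_l1 w g -> in_l1 w (conv f g).
Proof.
move=> hf hg; have [Mf fM] := hf; have [Mg gM] := hg.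
have [Af fA] := in_l1_abs_summable hf; have [Ag gA] := in_l1_abs_summable hg.
have Af0 : 0 <= Af by have := fA 0%N; rewrite big_ord0.
have Ag0 : 0 <= Ag by have := gA 0%N; rewrite big_ord0.
have tail_le (h : nat -> R[i]) (A : R) k : (forall N, \sum_(n < N) cnorm (h n) <= A) ->
    cnorm (csum (fun j => h (k + j)%N)) <= 2 * A.
  move=> hA; apply: cnorm_csum_le => N; apply: le_trans (hA (k + N)%N).
  by rewrite big_split_ord /= lerDr; apply: sumr_ge0 => n _; exact: cnorm_ge0.
have termwise k : cnorm (conv f g k) * w k <=
    2 * Ag * (cnorm (f k) * w k) + 2 * Af * (cnorm (g k) * w k).
  rewrite /conv; apply: le_trans (ler_wpM2r (ltW (weight_gt0 k)) (cnormD _ _)) _.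
  rewrite !cnormM mulrDl; apply: lerD;
    rewrite mulrAC [X in _ <= X]mulrC; apply: ler_wpM2l; try exact: tail_le;
    by rewrite mulr_ge0 ?cnorm_ge0 // ltW // weight_gt0.
exists (2 * Ag * Mf + 2 * Af * Mg) => N.
apply: le_trans; first by apply: ler_sum => k _; exact: termwise.
rewrite big_split /= -!mulr_sumr.
by apply: lerD; apply: ler_wpM2l; rewrite ?mulr_ge0 ?fM ?gM.
Qed.

End WeightedL1.

Section UpperTriangular.
Variables (R : realType) (w : nat -> R).
Hypothesis w_weight : is_weight w.
Local Notation T := (Tmat w).
Implicit Types s t a b : T.

Lemma memT0 : bmem (bzero T).
Proof. by split; [|split]; exact: in_l1_0. Qed.

Lemma memTD s t : bmem s -> bmem t -> bmem (badd s t).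
Proof.
by move=> [s1 [s2 s3]] [t1 [t2 t3]]; split; [|split]; exact: (in_l1D w_weight).
Qed.

Lemma memTN t : bmem t -> bmem (bopp t).
Proof. by move=> [t1 [t2 t3]]; split; [|split]; exact: in_l1N. Qed.

Lemma memTM s t : bmem s -> bmem t -> bmem (bmul s t).
Proof.
move=> [s1 [s2 s3]] [t1 [t2 t3]]; have conv_l1 := in_l1_conv w_weight.
by split; [|split]; rewrite /=; [|apply: (in_l1D w_weight)|]; exact: conv_l1.
Qed.

Lemma memT_big (I : Type) (r : seq I) (F : I -> T) : (forall i, bmem (F i)) ->
  bmem (\big[@badd R T/@bzero R T]_(i <- r) F i).
Proof.
move=> F_mem; elim: r => [|i r IH]; first by rewrite big_nil; exact: memT0.
by rewrite big_cons; exact: memTD.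
Qed.

Lemma l1norm11_le_bnorm t : bmem t -> l1norm w t.1.1 <= bnorm t.
Proof.
move=> [t1 [t2 t3]] /=.
by rewrite -addrA lerDl addr_ge0 // (l1norm_ge0 w_weight).
Qed.

Lemma l1norm12_le_bnorm t : bmem t -> l1norm w t.1.2 <= bnorm t.
Proof.
move=> [t1 [t2 t3]] /=.
by rewrite addrAC lerDr addr_ge0 // (l1norm_ge0 w_weight).
Qed.

Definition chi11 t : R[i] := csum t.1.1.

Lemma chi11D s t : bmem s -> bmem t -> chi11 (badd s t) = chi11 s + chi11 t.
Proof. by move=> [s1 _] [t1 _]; apply: csumD; exact: (in_l1_abs_summable w_weight). Qed.

Lemma chi11N t : bmem t -> chi11 (bopp t) = - chi11 t.
Proof. by move=> [t1 _]; apply: csumN; exact: (in_l1_abs_summable w_weight). Qed.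

Lemma chi11Z (l : R[i]) t : bmem t -> chi11 (bscal l t) = l * chi11 t.
Proof. by move=> [t1 _]; apply: csumZ; exact: (in_l1_abs_summable w_weight). Qed.

Lemma chi11M s t : bmem s -> bmem t -> chi11 (bmul s t) = chi11 s * chi11 t.
Proof. by move=> [s1 _] [t1 _]; apply: csum_conv; exact: (in_l1_abs_summable w_weight). Qed.

Lemma chi11_big (I : Type) (r : seq I) (F : I -> T) : (forall i, bmem (F i)) ->
  chi11 (\big[@badd R T/@bzero R T]_(i <- r) F i) = \sum_(i <- r) chi11 (F i).
Proof.
move=> F_mem; elim: r => [|i r IH]; first by rewrite !big_nil; exact: csum0.
by rewrite !big_cons chi11D ?IH //; exact: memT_big.
Qed.

Lemma cnorm_chi11_le t : bmem t -> cnorm (chi11 t) <= 2 * bnorm t.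
Proof.
move=> t_mem; apply: le_trans (cnorm_csum_le_l1norm w_weight (proj1 t_mem)) _.
by rewrite ler_pM2l // l1norm11_le_bnorm.
Qed.

Definition e11 : T := ((dirac0, fun _ => 0), fun _ => 0).
Definition e12 : T := ((fun _ => 0, dirac0), fun _ => 0).
Definition e22 : T := ((fun _ => 0, fun _ => 0), dirac0).

Lemma mem_e11 : bmem e11.
Proof. by split; [|split]; first [exact: (in_l1_dirac0 w_weight) | exact: in_l1_0]. Qed.

Lemma mem_e12 : bmem e12.
Proof. by split; [|split]; first [exact: (in_l1_dirac0 w_weight) | exact: in_l1_0]. Qed.

Lemma mem_e22 : bmem e22.
Proof. by split; [|split]; first [exact: (in_l1_dirac0 w_weight) | exact: in_l1_0]. Qed.

Lemma e12_mul_e22 : bmul e12 e22 = e12.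
Proof.
rewrite /= !conv0l conv_dirac0; congr (_, _, _).
by apply: funext => n; rewrite add0r.
Qed.

Lemma e11_mul_e12 : bmul e11 e12 = e12.
Proof.
rewrite /= !conv0l !conv0r conv_dirac0; congr (_, _, _).
by apply: funext => n; rewrite addr0.
Qed.

Lemma chi11_e11 : chi11 e11 = 1.
Proof. exact: csum_dirac0. Qed.

Definition phi a b : R[i] := chi11 a * b.1.2 0%N.

Lemma bdd_bilinear_phi : bdd_bilinear phi.
Proof.
split; [|split].
- move=> a a' b a_mem a'_mem _; rewrite /phi chi11D //=.
  by split; rewrite ?mulrDl ?mulrDr.
- move=> l a b a_mem _; rewrite /phi chi11Z //=.
  by split; [rewrite mulrA | rewrite mulrCA].
- exists 2 => a b a_mem b_mem; rewrite /phi cnormM.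
  apply: ler_pM; [exact: cnorm_ge0 | exact: cnorm_ge0 | exact: cnorm_chi11_le |].
  apply: le_trans (l1norm12_le_bnorm b_mem).
  exact: (cnorm_le_l1norm w_weight _ (proj1 (proj2 b_mem))).
Qed.

Lemma phi_e12_mul a b : phi (bmul e12 a) b = 0.
Proof. by rewrite /phi /chi11 /= conv0l csum0 mul0r. Qed.

Lemma phi_mul_e12 a b : bmem a -> bmem b -> phi a (bmul b e12) = chi11 (bmul a b).
Proof.
move=> a_mem b_mem; rewrite /phi chi11M // /= conv0r.
rewrite (conv_dirac0r (in_l1_abs_summable w_weight (proj1 b_mem))).
by rewrite /dirac0 /= mulr1 addr0.
Qed.

Lemma bimod_morph_chi11_pi (rho : T -> nat -> T * T) : bimod_morph rho ->
  csum (fun n => chi11 (bmul (rho e11 n).1 (rho e11 n).2)) = 0.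
Proof.
case=> rho_ok [_ [_ [_ [rho_lmul rho_rmul]]]].
have [u_mem _] := rho_ok _ mem_e11.
have left_exp := rho_lmul _ _ mem_e12 mem_e22 _ bdd_bilinear_phi.
have right_exp := rho_rmul _ _ mem_e12 mem_e11 _ bdd_bilinear_phi.
rewrite e12_mul_e22 in left_exp; rewrite e11_mul_e12 in right_exp.
have phi_left : (fun n => phi (tlmul e12 (rho e22) n).1 (tlmul e12 (rho e22) n).2)
    = fun _ => 0.
  by apply: funext => n; exact: phi_e12_mul.
have phi_right : (fun n => phi (trmul (rho e11) e12 n).1 (trmul (rho e11) e12 n).2)
    = fun n => chi11 (bmul (rho e11 n).1 (rho e11 n).2).
  by apply: funext => n; have [m1 m2] := u_mem n; exact: phi_mul_e12.
by rewrite -phi_right -right_exp left_exp phi_left csum0.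
Qed.

Lemma pi_to_chi11 (u : nat -> T * T) c : (forall n, bmem (u n).1 /\ bmem (u n).2) ->
  pi_to u c -> csum (fun n => chi11 (bmul (u n).1 (u n).2)) = chi11 c.
Proof.
move=> u_mem [c_mem u_c]; apply: ccvg_csum; apply: ccvg_cnorm => e e0.
have [N0 near_c] := u_c (e / 2) ltac:(by rewrite divr_gt0).
exists N0 => N /near_c near_cN.
have terms_mem n : bmem (bmul (u n).1 (u n).2) by apply: memTM; apply u_mem.
have S_mem := memT_big (index_enum 'I_N) terms_mem.
rewrite -chi11_big // -chi11N // -chi11D //; last exact: memTN.
apply: le_lt_trans (cnorm_chi11_le (memTD S_mem (memTN c_mem))) _.
by rewrite -ltr_pdivlMl // mulrC.
Qed.

End UpperTriangular.

Theorem mainTheorem8 (R : realType) (w : nat -> R) :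
  is_weight w -> ~ approx_biprojective (Tmat w).
Proof.
move=> w_weight [I [le [rho [_ [le_refl [_ [_ [rho_morph rho_approx]]]]]]]].
have e11_mem := mem_e11 w_weight.
have [i0 near_i0] := rho_approx _ e11_mem 4^-1 ltac:(by rewrite invr_gt0).
have [c [pi_c c_near]] := near_i0 i0 (le_refl i0).
have [c_mem _] := pi_c.
have [u_mem _] := proj1 (rho_morph i0) _ e11_mem.
have chi_c : chi11 c = 0.
  rewrite -(pi_to_chi11 w_weight u_mem pi_c).
  exact: (bimod_morph_chi11_pi w_weight (rho_morph i0)).
have := cnorm_chi11_le w_weight (memTD w_weight c_mem (memTN e11_mem)).
rewrite (chi11D w_weight c_mem (memTN e11_mem)) (chi11N w_weight e11_mem).
rewrite chi_c chi11_e11 sub0r cnormN cnorm1.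
lra.
Qed.
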